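(* Let $\mathfrak g=A_2$ and $n\in\mathbb N$. If $\mu=u_1\lambda_1+u_2\lambda_2\in S_{n\lambda_1,2}$, then $u_1+2u_2\le2n$.
   Context: $A_2=\mathfrak{sl}_3$ with fundamental weights $\lambda_1,\lambda_2$, Weyl group $W$, $\rho=\lambda_1+\lambda_2$, dominant weights $\Lambda^+$. $\Pi_\lambda$ is the set of weights of $V_\lambda$ and $S_{\lambda,a}=[\bigcup_{\sigma\in W}(\sigma(\rho)-\rho+a\Pi_\lambda)]\cap\Lambda^+$. *)

(* Weights of A_2 = sl_3 are written in the basis of
   fundamental weights: (a, b) : int * int stands for a*lambda_1 + b*lambda_2. *)
From mathcomp Require Import all_boot all_order all_algebra.
From Stdlib Require Import List.
Set Implicit Arguments. Unset Strict Implicit. Unset Printing Implicit Defensive.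
Import Order.TTheory GRing.Theory Num.Theory.
Local Open Scope ring_scope.

Definition weight := (int * int)%type.

Definition wadd (m p : weight) : weight := (m.1 + p.1, m.2 + p.2).
Definition wsub (m p : weight) : weight := (m.1 - p.1, m.2 - p.2).
Definition wscale (a : int) (m : weight) : weight := (a * m.1, a * m.2).

(* fundamental weights, rho, simple roots alpha1 = 2l1 - l2, alpha2 = -l1 + 2l2 *)
Definition lambda1 : weight := (1, 0).
Definition lambda2 : weight := (0, 1).
Definition rho : weight := wadd lambda1 lambda2.

(* simple reflections s_i(m) = m - <m, alpha_i^vee> alpha_i *)
Definition s1 (m : weight) : weight := (- m.1, m.1 + m.2).
Definition s2 (m : weight) : weight := (m.1 + m.2, - m.2).

Definition weyl : list (weight -> weight) :=
  [:: id; s1; s2; (fun m => s1 (s2 m)); (fun m => s2 (s1 m));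
      (fun m => s1 (s2 (s1 m)))].

(* mu <= la in the dominance order: la - mu is a nonnegative integer
   combination c1 alpha1 + c2 alpha2 of the simple roots *)
Definition dom_le (mu la : weight) : Prop :=
  exists c1 c2 : nat,
    la.1 - mu.1 = 2 * c1%:Z - c2%:Z /\ la.2 - mu.2 = - c1%:Z + 2 * c2%:Z.

(* Pi_la = set of weights of the irreducible module V_la (la dominant):
   mu is a weight of V_la iff w mu <= la for every w in W. *)
Definition Pi (la mu : weight) : Prop :=
  forall w, List.In w weyl -> dom_le (w mu) la.

Definition dominant (mu : weight) : Prop := 0 <= mu.1 /\ 0 <= mu.2.

Definition S (la : weight) (a : int) (mu : weight) : Prop :=
  dominant mu /\
  exists sigma, List.In sigma weyl /\
    exists nu, Pi la nu /\ mu = wadd (wsub (sigma rho) rho) (wscale a nu).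

(* Let f be the linear form with f(lambda1) = 1, f(lambda2) = 2; it vanishes on
   alpha1 and takes the value 3 on alpha2, so it is monotone for the dominance
   order.  A weight nu of V_{n lambda1} satisfies nu <= n lambda1, whence
   f(nu) <= n, and sigma(rho) <= rho for every sigma in W, whence
   f(sigma(rho) - rho) <= 0.  Therefore f(sigma(rho) - rho + 2 nu) <= 2n. *)
From mathcomp Require Import all_boot all_order all_algebra.
From mathcomp Require Import zify.
Import Order.TTheory GRing.Theory Num.Theory.
Local Open Scope ring_scope.

(* Three times the pairing with the fundamental coweight omega2^vee. *)
Definition pair3_coweight2 (m : weight) : int := m.1 + 2 * m.2.

Lemma pair3_coweight2_wadd (m p : weight) :
  pair3_coweight2 (wadd m p) = pair3_coweight2 m + pair3_coweight2 p.
Proof. rewrite /pair3_coweight2 /=; lia. Qed.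

Lemma pair3_coweight2_wsub (m p : weight) :
  pair3_coweight2 (wsub m p) = pair3_coweight2 m - pair3_coweight2 p.
Proof. rewrite /pair3_coweight2 /=; lia. Qed.

Lemma pair3_coweight2_wscale (a : int) (m : weight) :
  pair3_coweight2 (wscale a m) = a * pair3_coweight2 m.
Proof. by rewrite /pair3_coweight2 /= mulrDr mulrCA mulrA. Qed.

Lemma pair3_coweight2_dom_le (mu la : weight) :
  dom_le mu la -> pair3_coweight2 mu <= pair3_coweight2 la.
Proof. by case=> c1 [c2 [E1 E2]]; rewrite /pair3_coweight2; lia. Qed.

Lemma Pi_dom_le (la nu : weight) : Pi la nu -> dom_le nu la.
Proof. by move=> Hnu; apply: (Hnu id); left. Qed.

Lemma dom_le_weyl_dominant (sigma : weight -> weight) (m : weight) :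
  dominant m -> List.In sigma weyl -> dom_le (sigma m) m.
Proof.
case: m => [[a|?] [b|?]] [/= ha hb] //.
case=> [<-|[<-|[<-|[<-|[<-|[<-|[]]]]]]]; rewrite /dom_le /s1 /s2 /=.
- by exists 0%N, 0%N; lia.
- by exists a, 0%N; lia.
- by exists 0%N, b; lia.
- by exists (a + b)%N, b; lia.
- by exists a, (a + b)%N; lia.
- by exists (a + b)%N, (a + b)%N; lia.
Qed.

Lemma dominant_rho : dominant rho.
Proof. by []. Qed.

Theorem mainTheorem16 (n : nat) (u1 u2 : int) :
  S (wscale n%:Z lambda1) 2 (wadd (wscale u1 lambda1) (wscale u2 lambda2)) ->
  u1 + 2 * u2 <= 2 * n%:Z.
Proof.
move=> [_ [sigma [Hsigma [nu [Hnu Hmu]]]]].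
have Hrho : pair3_coweight2 (sigma rho) <= pair3_coweight2 rho.
  exact/pair3_coweight2_dom_le/dom_le_weyl_dominant/Hsigma/dominant_rho.
have Hnu_le : pair3_coweight2 nu <= n%:Z.
  have := pair3_coweight2_dom_le _ _ (Pi_dom_le _ _ Hnu).
  by rewrite pair3_coweight2_wscale /pair3_coweight2 /= mulr0 addr0 mulr1.
have -> : u1 + 2 * u2 =
    pair3_coweight2 (wadd (wscale u1 lambda1) (wscale u2 lambda2)).
  by rewrite /pair3_coweight2 /=; lia.
rewrite Hmu pair3_coweight2_wadd pair3_coweight2_wsub pair3_coweight2_wscale.
lia.
Qed.
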